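(* Let $p\ge2$, $n\ge1$, $\alpha>1$ real, and $m\in\{j/p^n:0\le j\le p^n\}$ be fixed, and let $\mathcal{B}_m$ be the set of Boolean functions $f:(\mathbb{Z}/p\mathbb{Z})^n\to\{0,1\}$ with $\mathbb{E} f=m$. There exists $\epsilon_0>0$ such that for every $\epsilon\in(0,\epsilon_0)$, every $f\in\mathcal{B}_m$ maximizing $\mathbb{E}(T_\epsilon f)^\alpha$ over $\mathcal{B}_m$ satisfies $I(f)=\min\{I(g):g\in\mathcal{B}_m\}$.
   Context: $(\mathbb{Z}/p\mathbb{Z})^n$ carries the uniform measure; $X$ is a uniform random element. Here the noise operator is $T_\epsilon f(x)=\mathbb{E} f(x+Z)$, where $Z$ has independent coordinates, each equal to $0$ with probability $1-\epsilon$ and to $1$ and to $-1$ (i.e. $p-1$) with probability $\epsilon/2$ each. For $j\in[n]$, let $\tilde Z_j$ take the values $1$ and $-1$ with probability $1/2$ each, independent of $X$; $\tilde\sigma_j(x)=(x_1,\dots,x_j+\tilde Z_j,\dots,x_n)$, $I_j(f)=\mathbb{P}(f(X)\ne f(\tilde\sigma_j(X)))$, and the total influence is $I(f)=\sum_{j=1}^nI_j(f)$. *)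

From HB Require Import structures.
From mathcomp Require Import all_boot all_order all_algebra.
From mathcomp Require Import all_classical all_reals.
From mathcomp Require Import exp.
Set Implicit Arguments. Unset Strict Implicit. Unset Printing Implicit Defensive.
Import Order.TTheory GRing.Theory Num.Theory.
Local Open Scope ring_scope.

(* Points of (Z/pZ)^n (use only with 1 < p). *)
Definition pt (p n : nat) := {ffun 'I_n -> 'Z_p}.

Definition ptadd (p n : nat) (x y : pt p n) : pt p n := [ffun i => x i + y i].

Definition shift (p n : nat) (x : pt p n) (j : 'I_n) (s : 'Z_p) : pt p n :=
  [ffun i => if i == j then x i + s else x i].

Definition bval (R : realType) (p n : nat) (f : {ffun pt p n -> bool}) (x : pt p n) : R :=
  (f x)%:R.

Definition expect (R : realType) (p n : nat) (h : pt p n -> R) : R :=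
  (\sum_(x : pt p n) h x) / (#|{: pt p n}|)%:R.

(* Noise coordinates: label 0 -> value 0 (prob 1-eps), label 1 -> value 1
   (prob eps/2), label 2 -> value -1 (prob eps/2).  For p = 2 the values 1 and
   -1 coincide, as in the paper. *)
Definition nval (p : nat) (k : 'I_3) : 'Z_p :=
  if val k == 0%N then 0 else if val k == 1%N then 1 else -1.
Definition nweight (R : realType) (eps : R) (k : 'I_3) : R :=
  if val k == 0%N then 1 - eps else eps / 2.

Definition noiseop (R : realType) (p n : nat) (eps : R) (h : pt p n -> R)
    (x : pt p n) : R :=
  \sum_(c : {ffun 'I_n -> 'I_3})
     (\prod_(i < n) nweight eps (c i)) * h (ptadd x [ffun i => nval p (c i)]).

Definition influence_j (R : realType) (p n : nat) (f : {ffun pt p n -> bool})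
    (j : 'I_n) : R :=
  expect (fun x : pt p n =>
     ((f x != f (shift x j 1))%:R + (f x != f (shift x j (-1)))%:R) / 2 : R).

Definition total_influence (R : realType) (p n : nat) (f : {ffun pt p n -> bool}) : R :=
  \sum_(j < n) influence_j R f j.

Definition inB (R : realType) (p n : nat) (m : R) (f : {ffun pt p n -> bool}) : Prop :=
  expect (bval R f) = m.

Definition noise_moment (R : realType) (p n : nat) (eps alpha : R)
    (f : {ffun pt p n -> bool}) : R :=
  expect (fun x => powR (noiseop eps (bval R f) x) alpha).

From HB Require Import structures.
From mathcomp Require Import all_boot all_order all_algebra.
From mathcomp Require Import all_classical all_reals.
From mathcomp Require Import sequences exp.
From mathcomp Require Import ring lra.
Set Implicit Arguments. Unset Strict Implicit. Unset Printing Implicit Defensive.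
Import Order.TTheory GRing.Theory Num.Theory.
Local Open Scope ring_scope.

(* Where [f x = 1], write [T_eps f x = 1 - U x].  Noise configurations moving exactly
   one coordinate by [+-1] have weight [eps/2 (1-eps)^(n-1)], all others [O(eps^2)], so
   [U x] is [eps/2 (1-eps)^(n-1)] times the number of neighbours [x +- e_j] where [f]
   vanishes, up to [O(eps^2)]; expanding [(1 - U)^alpha] to second order gives its
   contribution.  Where [f x = 0], [T_eps f x = O(eps)] and its [alpha]-th power is
   [o(eps)] because [alpha > 1].  Summing over [x], and since these neighbour counts add
   up to [p^n I(f)],
     [E (T_eps f)^alpha = E f - alpha eps/2 (1-eps)^(n-1) I(f) + O(eps^2 + eps^alpha)]
   uniformly in [f].  Total influences lie in [p^-n Z], so for small [eps] a function of
   mean [m] with strictly larger influence than another has a strictly smaller moment. *)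

Section PowerBounds.
Variable R : realType.
Implicit Types a c t x : R.

(* Young's inequality with exponents [a] and [a / (a - 1)], applied to [t * 1]. *)
Lemma powR_ge_tangent1 a t : 1 <= a -> 0 <= t -> 1 - a * (1 - t) <= t `^ a.
Proof.
rewrite le_eqVlt => /predU1P[<- t0|a1 t0]; first by rewrite powRr1 //; lra.
have q0 : 0 < a / (a - 1) by apply: divr_gt0; lra.
have := @conjugate_powR R t 1 a (a / (a - 1)) t0 ler01 ltac:(lra) q0.
rewrite invf_div powR1 mulr1 => /(_ ltac:(field; lra)).
have -> : t `^ a / a + 1 * ((a - 1) / a) = (t `^ a + a - 1) / a by field; lra.
rewrite ler_pdivlMr; lra.
Qed.

Lemma powR_le_quadratic1 a t : 0 <= a -> 0 <= t <= 1 ->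
  t `^ a <= 1 - a * (1 - t) + (a * (1 - t)) ^+ 2.
Proof.
move=> a0 /andP[t0 t1].
have [->|tn0] := eqVneq t 0.
  have [->|an0] := eqVneq a 0; first by rewrite powRr0; nra.
  by rewrite powR0 //; nra.
set s := a * (1 - t).
have s0 : 0 <= s by apply: mulr_ge0; lra.
have exp_le : t `^ a <= expR (- s).
  have tp : 0 < t by rewrite lt0r tn0.
  have ln_le : ln t <= t - 1.
    by have := @le_ln1Dx R (t - 1); rewrite (addrC 1) subrK; apply; lra.
  by rewrite /powR (negbTE tn0) ler_expR /s -mulrN opprB ler_wpM2l.
have inv_le : expR (- s) <= (1 + s)^-1.
  by rewrite expRN lef_pV2 ?posrE ?expR_gt0 ?expR_ge1Dx //; lra.
have : (1 + s)^-1 <= 1 - s + s ^+ 2.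
  rewrite -div1r ler_pdivrMr; last lra.
  have -> : (1 - s + s ^+ 2) * (1 + s) = 1 + s ^+ 3 by ring.
  by rewrite lerDl exprn_ge0.
lra.
Qed.

Lemma powR_le_linear_near0 a c : 1 < a -> 0 < c ->
  exists2 d, 0 < d & forall x, 0 <= x <= d -> x `^ a <= c * x.
Proof.
move=> a1 c0; exists (c `^ (a - 1)^-1); first exact: powR_gt0.
move=> x /andP[x0 xd]; rewrite [c * x]mulrC -mulr_powRB1 //; last lra.
suff : x `^ (a - 1) <= c by exact: ler_wpM2l.
have := @ge0_ler_powR R (a - 1) ltac:(lra) x _ x0 _ xd.
rewrite -powRrM mulVf ?powRr1 ?nnegrE ?powR_ge0; [by apply | lra | lra].
Qed.

Lemma quad_powR_lt_linear_near0 a c D E : 1 < a -> 0 < c -> 0 <= D -> 0 <= E ->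
  exists2 e0, 0 < e0 & forall e, 0 < e < e0 -> D * e ^+ 2 + E * e `^ a < c * e.
Proof.
move=> a1 c0 D0 E0.
have cE_gt0 : 0 < c / (2 * (E + 1)) by apply: divr_gt0; lra.
have [d d0 hd] := powR_le_linear_near0 a1 cE_gt0.
have e1_gt0 : 0 < c / (2 * (D + 1)) by apply: divr_gt0; lra.
exists (Num.min (c / (2 * (D + 1))) d); first by rewrite lt_min e1_gt0 d0.
move=> e /andP[e0]; rewrite lt_min => /andP[eD ed].
have quad : D * e ^+ 2 < c / 2 * e.
  have : (D + 1) * e < c / 2 by move: eD; rewrite ltr_pdivlMr; lra.
  nra.
have pow : E * e `^ a <= c / 2 * e.
  have := hd e ltac:(lra).
  have : E * (c / (2 * (E + 1))) <= c / 2.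
    by rewrite mulrA ler_pdivrMr; nra.
  nra.
lra.
Qed.
End PowerBounds.

Section NoiseOperator.
Variables (R : realType) (p n : nat).
Local Notation P := (pt p n).
Local Notation label := {ffun 'I_n -> 'I_3}.
Implicit Types (eps : R) (c : label).

Definition noise_weight eps c : R := \prod_(i < n) nweight eps (c i).
Definition noise_vec c : P := [ffun i => nval p (c i)].
Definition label_supp c : {set 'I_n} := [set i | c i != ord0].
Definition zero_label : label := [ffun=> ord0].
Definition unit_label (j : 'I_n) (k : 'I_3) : label :=
  [ffun i => if i == j then k else ord0].

Lemma nweightE eps (k : 'I_3) :
  nweight eps k = if k == ord0 then 1 - eps else eps / 2.
Proof. by case: k => [[|k] ?]. Qed.

Lemma noise_weightE eps c : noise_weight eps c =
  (eps / 2) ^+ #|label_supp c| * (1 - eps) ^+ (n - #|label_supp c|).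
Proof.
rewrite /noise_weight (bigID (mem (label_supp c))) /=.
rewrite (eq_bigr (fun=> eps / 2)) => [|i]; last by rewrite inE nweightE => /negbTE ->.
rewrite [X in _ * X](eq_bigr (fun=> 1 - eps)) => [|i].
  by rewrite !prodr_const -[n in (n - _)%N](card_ord n) -(cardC (label_supp c)) addKn.
by rewrite inE nweightE negbK => ->.
Qed.

Lemma sum_noise_weight eps : \sum_c noise_weight eps c = 1.
Proof.
rewrite /noise_weight -(bigA_distr_bigA (fun i (k : 'I_3) => nweight eps k)) /=.
by rewrite big1 // => i _; rewrite !big_ord_recl big_ord0 /nweight /=; field.
Qed.

Lemma noise_weight_ge0 eps c : 0 <= eps <= 1 -> 0 <= noise_weight eps c.
Proof. by move=> he; rewrite noise_weightE; apply: mulr_ge0; apply: exprn_ge0; lra. Qed.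

Lemma noise_weight_le_supp eps c k : 0 <= eps <= 1 ->
  (k <= #|label_supp c|)%N -> noise_weight eps c <= (eps / 2) ^+ k.
Proof.
move=> he hk; rewrite noise_weightE -[leRHS]mulr1.
apply: ler_pM; try apply: exprn_ge0; try lra.
  by apply: ler_wiXn2l => //; lra.
by apply: exprn_ile1; lra.
Qed.

Lemma noise_weight_supp1 eps c :
  #|label_supp c| = 1%N -> noise_weight eps c = eps / 2 * (1 - eps) ^+ n.-1.
Proof. by move=> h1; rewrite noise_weightE h1 subn1 expr1. Qed.

Lemma mem_label_supp c i : (i \in label_supp c) = (c i != ord0).
Proof. by rewrite inE. Qed.

Lemma label_supp_card0 c : (#|label_supp c| == 0%N) = (c == zero_label).
Proof.
apply/idP/eqP => [/eqP/card0_eq h|->].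
  by apply/ffunP => i; move: (h i); rewrite mem_label_supp ffunE => /negbFE/eqP.
by apply/eqP/eq_card0 => i; rewrite mem_label_supp ffunE eqxx.
Qed.

Lemma label_supp_unit j k : k != ord0 -> label_supp (unit_label j k) = [set j].
Proof.
by move=> hk; apply/setP => i; rewrite !inE ffunE; case: (i == j).
Qed.

Lemma label_supp1 : [set c | #|label_supp c| == 1%N] =
  [set unit_label jk.1 jk.2 | jk in [set jk : 'I_n * 'I_3 | jk.2 != ord0]].
Proof.
apply/setP => c; rewrite inE; apply/idP/imsetP => [/cards1P[j hj] | [[j k]]].
  have hcj : c j != ord0 by rewrite -mem_label_supp hj set11.
  exists (j, c j); rewrite ?inE //=; apply/ffunP => i; rewrite ffunE.
  case: eqP => [-> //|/eqP hij]; apply/eqP/negPn.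
  by rewrite -mem_label_supp hj inE.
by rewrite inE /= => hk ->; rewrite label_supp_unit // cards1.
Qed.

Lemma sum_label_supp1 (F : label -> R) :
  \sum_(c | #|label_supp c| == 1%N) F c = \sum_j \sum_(k | k != ord0) F (unit_label j k).
Proof.
rewrite -big_set label_supp1 big_imset /=.
  by rewrite pair_big_dep; apply: eq_bigl => jk; rewrite inE.
move=> [j k] [j' k']; rewrite !inE /= => hk hk' e.
have ejj' : j = j' by apply/set1_inj; rewrite -(label_supp_unit j hk) e label_supp_unit.
by move: e; rewrite -ejj' => /ffunP /(_ j); rewrite !ffunE eqxx => ->.
Qed.

Local Notation K := (#|{: label}|%:R : R).

Definition unit_weight eps : R := eps / 2 * (1 - eps) ^+ n.-1.

Definition unit_count (b : label -> bool) : nat :=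
  \sum_j \sum_(k | k != ord0) b (unit_label j k).

Lemma noise_sum_bounds eps (b : label -> bool) : 0 <= eps <= 1 -> ~~ b zero_label ->
  unit_weight eps * (unit_count b)%:R <= \sum_c noise_weight eps c * (b c)%:R
    <= unit_weight eps * (unit_count b)%:R + K * eps ^+ 2.
Proof.
move=> he hb0; rewrite (bigID (fun c => #|label_supp c| == 1%N)) /=.
have -> : \sum_(c | #|label_supp c| == 1%N) noise_weight eps c * (b c)%:R
          = unit_weight eps * (unit_count b)%:R.
  rewrite (eq_bigr (fun c => unit_weight eps * (b c)%:R)) => [|c /eqP h1].
    rewrite -mulr_sumr sum_label_supp1 /unit_count natr_sum; congr (_ * _).
    by apply: eq_bigr => j _; rewrite natr_sum.
  by rewrite noise_weight_supp1.
have term_le c :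
    #|label_supp c| != 1%N -> 0 <= noise_weight eps c * (b c)%:R <= eps ^+ 2.
  move=> h1; have w0 := noise_weight_ge0 c he.
  have [/eqP|supp_gt0] := posnP #|label_supp c|.
    rewrite label_supp_card0 => /eqP ->.
    by rewrite (negbTE hb0) mulr0 lexx exprn_ge0 //; lra.
  have supp_ge2 : (2 <= #|label_supp c|)%N by rewrite ltn_neqAle eq_sym h1.
  have w_le := noise_weight_le_supp he supp_ge2.
  case: (b c); rewrite ?mulr1 ?mulr0 ?lexx ?exprn_ge0 //=; try lra.
rewrite big_mkcond /= lerD2l lerDl; apply/andP; split.
  by apply: sumr_ge0 => c _; case: ifP => // h1; case/andP: (term_le c h1).
rewrite mulr_natl -sumr_const; apply: ler_sum => c _.
by case: ifP => h1; [case/andP: (term_le c h1) | apply: exprn_ge0; lra].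
Qed.

Lemma noise_sum_le_eps eps (b : label -> bool) : 0 <= eps <= 1 -> ~~ b zero_label ->
  0 <= \sum_c noise_weight eps c * (b c)%:R <= K * eps.
Proof.
move=> he hb0; have term c : 0 <= noise_weight eps c * (b c)%:R <= eps.
  have w0 := noise_weight_ge0 c he.
  have [/eqP|supp_gt0] := posnP #|label_supp c|.
    by rewrite label_supp_card0 => /eqP ->; rewrite (negbTE hb0) mulr0 lexx; lra.
  have := noise_weight_le_supp he supp_gt0; rewrite expr1.
  by case: (b c); rewrite ?mulr1 ?mulr0 /=; lra.
apply/andP; split; first by apply: sumr_ge0 => c _; case/andP: (term c).
by rewrite mulr_natl -sumr_const; apply: ler_sum => c _; case/andP: (term c).
Qed.

Lemma ptadd_noise_vec0 x : ptadd x (noise_vec zero_label) = x.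
Proof. by apply/ffunP => i; rewrite !ffunE /nval /= addr0. Qed.

Lemma ptadd_noise_vec_unit x j k :
  ptadd x (noise_vec (unit_label j k)) = shift x j (nval p k).
Proof. by apply/ffunP => i; rewrite !ffunE; case: (i == j); rewrite /nval /= ?addr0. Qed.

Lemma sum_nonzero_label (F : 'Z_p -> R) :
  \sum_(k < 3 | k != ord0) F (nval p k) = F 1 + F (-1).
Proof. by rewrite big_mkcond !big_ord_recl big_ord0 /= add0r addr0. Qed.

Lemma shiftK x j s : shift (shift x j s) j (- s) = x :> P.
Proof. by apply/ffunP => i; rewrite !ffunE; case: (i == j); rewrite ?addrK. Qed.

Lemma sum_shift (F : P -> R) j s : \sum_x F (shift x j s) = \sum_x F x.
Proof.
rewrite [RHS](reindex_inj (h := fun x => shift x j s)) //.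
exact: (can_inj (g := fun x => shift x j (- s)) (fun x => shiftK x j s)).
Qed.

Definition approx_err (alpha eps : R) : R :=
  (alpha * K + (alpha * K) ^+ 2) * eps ^+ 2 + (K * eps) `^ alpha.

Lemma expect_dist_le (h1 h2 : P -> R) (e : R) :
  (forall x, `|h1 x - h2 x| <= e) -> `|expect h1 - expect h2| <= e.
Proof.
move=> h; have N_gt0 : 0 < #|{: P}|%:R :> R.
  by rewrite ltr0n; apply/card_gt0P; exists [ffun=> 0].
rewrite /expect -mulrBl -sumrB normrM [`|_^-1|]ger0_norm ?invr_ge0 ?ler0n // ler_pdivrMr //.
apply: le_trans (ler_norm_sum _ _ _) _.
by rewrite mulr_natr -sumr_const; apply: ler_sum => x _; apply: h.
Qed.

Lemma approx_err_small alpha : 1 < alpha ->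
  exists2 e0, 0 < e0 <= 1 / 2 & forall eps, 0 < eps < e0 ->
    2 * approx_err alpha eps < alpha * unit_weight eps * #|{: P}|%:R^-1.
Proof.
move=> a1; set N : R := #|{: P}|%:R.
have N_gt0 : 0 < N by rewrite ltr0n; apply/card_gt0P; exists [ffun=> 0].
have K0 : 0 <= K := ler0n _ _.
set c := alpha * (1 / 2) ^+ n.-1 / (2 * N).
have c_gt0 : 0 < c by apply: divr_gt0; [apply: mulr_gt0; rewrite ?exprn_gt0 |]; lra.
have D0 : 0 <= 2 * (alpha * K + (alpha * K) ^+ 2).
  by apply: mulr_ge0 => //; apply: addr_ge0; rewrite ?sqr_ge0 //; apply: mulr_ge0 => //; lra.
have E0 : 0 <= 2 * K `^ alpha by apply: mulr_ge0; rewrite ?powR_ge0.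
have [e1 e1_gt0 small] := quad_powR_lt_linear_near0 a1 c_gt0 D0 E0.
exists (Num.min e1 (1 / 2)); first by rewrite lt_min e1_gt0 ge_min lexx orbT /=; lra.
move=> eps /andP[eps_gt0]; rewrite lt_min => /andP[eps_e1 eps_half].
have -> : 2 * approx_err alpha eps
    = 2 * (alpha * K + (alpha * K) ^+ 2) * eps ^+ 2 + 2 * K `^ alpha * eps `^ alpha.
  by rewrite /approx_err powRM //; [ring | lra].
apply: (lt_le_trans (small eps _)); first by rewrite eps_gt0.
have w_ge : eps / 2 * (1 / 2) ^+ n.-1 <= unit_weight eps.
  by apply: ler_wpM2l; [lra | apply: lerXn2r; rewrite ?nnegrE; lra].
have -> : c * eps = alpha * (eps / 2 * (1 / 2) ^+ n.-1) * N^-1 by rewrite /c; field; lra.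
by apply: ler_wpM2r; [rewrite invr_ge0; lra | apply: ler_wpM2l; lra].
Qed.

Section BooleanFunction.
Variable f : {ffun P -> bool}.

Definition boundary_deg x : nat :=
  \sum_j \sum_(k | k != ord0) ~~ f (shift x j (nval p k)).
Definition edge_boundary : nat := \sum_x f x * boundary_deg x.

Lemma sum_neq_shift j s : \sum_x (f x != f (shift x j s))%:R
  = \sum_x (f x && ~~ f (shift x j s))%:R + \sum_x (f x && ~~ f (shift x j (- s)))%:R :> R.
Proof.
rewrite -(sum_shift (fun x => (f x && ~~ f (shift x j (- s)))%:R) j s) -big_split /=.
apply: eq_bigr => x _; rewrite shiftK.
by case: (f x); case: (f (shift x j s)); rewrite /= ?addr0 ?add0r.
Qed.

Lemma boundary_degE x : (boundary_deg x)%:R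
  = \sum_j ((~~ f (shift x j 1))%:R + (~~ f (shift x j (-1)))%:R) :> R.
Proof.
rewrite natr_sum; apply: eq_bigr => j _.
by rewrite natr_sum (sum_nonzero_label (fun s => (~~ f (shift x j s))%:R)).
Qed.

Lemma total_influenceE : total_influence R f = edge_boundary%:R / #|{: P}|%:R.
Proof.
rewrite /total_influence /influence_j /expect -mulr_suml; congr (_ / _).
rewrite /edge_boundary natr_sum.
under [RHS]eq_bigr do rewrite natrM boundary_degE mulr_sumr.
rewrite [RHS]exchange_big; apply: eq_bigr => j _ /=.
rewrite -mulr_suml big_split /= !sum_neq_shift opprK.
have -> : \sum_x (f x)%:R * ((~~ f (shift x j 1))%:R + (~~ f (shift x j (-1)))%:R)
    = \sum_x (f x && ~~ f (shift x j 1))%:R + \sum_x (f x && ~~ f (shift x j (-1)))%:R :> R.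
  by rewrite -big_split; apply: eq_bigr => x _; case: (f x); rewrite /= ?mul1r ?mul0r ?addr0.
by field.
Qed.

Lemma noiseop_bool_bounds eps x : 0 <= eps <= 1 -> 0 <= noiseop eps (bval R f) x <= 1.
Proof.
move=> he; have w0 c := noise_weight_ge0 c he.
apply/andP; split.
  by apply: sumr_ge0 => c _; apply: mulr_ge0; [exact: w0 | exact: ler0n].
rewrite -(sum_noise_weight eps); apply: ler_sum => c _.
by rewrite /bval; case: (f _); rewrite ?mulr1 ?mulr0.
Qed.

Lemma noiseop_bool_compl eps x : noiseop eps (bval R f) x
  = 1 - \sum_c noise_weight eps c * (~~ f (ptadd x (noise_vec c)))%:R.
Proof.
rewrite -[X in X - _](sum_noise_weight eps) -sumrB; apply: eq_bigr => c _.
by rewrite /bval; case: (f _); rewrite /= ?mulr1 ?mulr0 ?subr0 ?subrr.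
Qed.

Lemma unit_count_boundary x :
  unit_count (fun c => ~~ f (ptadd x (noise_vec c))) = boundary_deg x.
Proof. by apply: eq_bigr => j _; apply: eq_bigr => k _; rewrite ptadd_noise_vec_unit. Qed.

Lemma noiseop_powR_approx eps alpha x : 0 <= eps <= 1 -> 1 < alpha ->
  `|noiseop eps (bval R f) x `^ alpha
      - (f x)%:R * (1 - alpha * unit_weight eps * (boundary_deg x)%:R)|
    <= approx_err alpha eps.
Proof.
move=> he a1; have K0 : 0 <= K := ler0n _ _.
have Ke0 : 0 <= K * eps by apply: mulr_ge0; lra.
have sq0 : 0 <= (alpha * K) ^+ 2 * eps ^+ 2 by apply: mulr_ge0; apply: sqr_ge0.
have pow0 : 0 <= (K * eps) `^ alpha := powR_ge0 _ _.
have T01 := noiseop_bool_bounds x he.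
rewrite /approx_err mulrDl.
case fx: (f x); last first.
  have hb0 : ~~ f (ptadd x (noise_vec zero_label)) by rewrite ptadd_noise_vec0 fx.
  have /andP[V0 VK] := noise_sum_le_eps (b := fun c => f (ptadd x (noise_vec c))) he hb0.
  rewrite mul0r subr0 ger0_norm ?powR_ge0 //.
  have : noiseop eps (bval R f) x `^ alpha <= (K * eps) `^ alpha.
    by apply: ge0_ler_powR; rewrite ?nnegrE //; lra.
  have : 0 <= alpha * K * eps ^+ 2.
    by apply: mulr_ge0; [apply: mulr_ge0 => //; lra | apply: exprn_ge0; lra].
  lra.
have hb0 : ~~ ~~ f (ptadd x (noise_vec zero_label)) by rewrite ptadd_noise_vec0 fx.
have := noise_sum_bounds (b := fun c => ~~ f (ptadd x (noise_vec c))) he hb0.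
have := noise_sum_le_eps (b := fun c => ~~ f (ptadd x (noise_vec c))) he hb0.
move: T01; rewrite mul1r noiseop_bool_compl unit_count_boundary /=.
set U := \sum_c _; set B := (boundary_deg x)%:R.
move=> T01 /andP[U0 UK] /andP[U_lo U_hi].
have aU_lo : alpha * unit_weight eps * B <= alpha * U.
  by rewrite -mulrA ler_pM2l //; lra.
have aU_hi : alpha * U <= alpha * unit_weight eps * B + alpha * K * eps ^+ 2.
  by have := ler_wpM2l (ltW (lt_trans ltr01 a1)) U_hi; rewrite mulrDr !mulrA.
have aU_sq : (alpha * U) ^+ 2 <= (alpha * K) ^+ 2 * eps ^+ 2.
  by rewrite -exprMn -mulrA; apply: lerXn2r; rewrite ?nnegrE ?ler_pM2l //;
    try lra; apply: mulr_ge0; lra.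
have lo := powR_ge_tangent1 (ltW a1) (andP T01).1; rewrite subKr in lo.
have hi := powR_le_quadratic1 (ltW (lt_trans ltr01 a1)) T01; rewrite subKr in hi.
by rewrite ler_distl; apply/andP; split; lra.
Qed.

Lemma noise_moment_approx eps alpha : 0 <= eps <= 1 -> 1 < alpha ->
  `|noise_moment eps alpha f
      - (expect (bval R f) - alpha * unit_weight eps * total_influence R f)|
    <= approx_err alpha eps.
Proof.
move=> he a1.
have -> : expect (bval R f) - alpha * unit_weight eps * total_influence R f
    = expect (fun x => (f x)%:R * (1 - alpha * unit_weight eps * (boundary_deg x)%:R)).
  rewrite total_influenceE /expect mulrA -mulrBl; congr (_ / _).
  rewrite /edge_boundary natr_sum mulr_sumr -sumrB; apply: eq_bigr => x _.
  by rewrite natrM /bval; ring.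
by apply: expect_dist_le => x; apply: noiseop_powR_approx.
Qed.

End BooleanFunction.

Lemma total_influence_gap (f g : {ffun P -> bool}) :
  total_influence R g < total_influence R f ->
  total_influence R g + #|{: P}|%:R^-1 <= total_influence R f.
Proof.
have N_gt0 : 0 < #|{: P}|%:R :> R by rewrite ltr0n; apply/card_gt0P; exists [ffun=> 0].
rewrite !total_influenceE -[X in _ + X]mul1r -mulrDl.
by rewrite ltr_pM2r ?ler_pM2r ?invr_gt0 // natr1 ltr_nat ler_nat.
Qed.

End NoiseOperator.

Theorem theorem6 (R : realType) (p n : nat) (alpha : R) (j : nat) :
  (1 < p)%N -> (0 < n)%N -> 1 < alpha -> (j <= p ^ n)%N ->
  let m : R := j%:R / (p ^ n)%:R in
  exists eps0 : R, 0 < eps0 /\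
    forall eps : R, 0 < eps -> eps < eps0 ->
    forall f : {ffun pt p n -> bool},
      inB m f ->
      (forall g : {ffun pt p n -> bool}, inB m g ->
          noise_moment eps alpha g <= noise_moment eps alpha f) ->
      forall g : {ffun pt p n -> bool}, inB m g ->
        total_influence R f <= total_influence R g.
Proof.
move=> _ _ a1 _ m.
have [e0 /andP[e0_gt0 e0_half] small] := approx_err_small p n a1.
exists e0; split => // eps eps_gt0 eps_lt f f_m f_max g g_m.
have he : 0 <= eps <= 1 by apply/andP; split; lra.
rewrite leNgt; apply/negP => /total_influence_gap gap.
have := noise_moment_approx f he a1; have := noise_moment_approx g he a1.
rewrite f_m g_m !ler_distl => /andP[g_lo _] /andP[_ f_hi].
have := f_max g g_m; have := small eps ltac:(lra).
set w := alpha * unit_weight n eps in g_lo f_hi *.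
have : w * #|{: pt p n}|%:R^-1 <= w * (total_influence R f - total_influence R g).
  apply: ler_wpM2l; last lra.
  rewrite /w /unit_weight; apply: mulr_ge0; first lra.
  by apply: mulr_ge0; [lra | apply: exprn_ge0; lra].
rewrite mulrBr; lra.
Qed.
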